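(* Let $(C,S)$ be a right-angled Coxeter system, $D>0$, and $\alpha,\beta\in C$ such that $\gamma=\alpha^{-1}\beta$ is nontrivial and has $D$-bounded product projections. Then there is a minimal wall $W$ in $\mathbf{W}(\alpha,\beta)$ such that $W\cap W'\ne\emptyset$ for at most $(2D+1)\cdot4^D$ walls $W'\in\mathbf{W}(\alpha,\beta)$.
   Context: Walls: for a reflection $r$ of $C$ (conjugate of a generator), the set of edges $\{g,gs\}$ of $\mathrm{Cay}(C,S)$ with $gsg^{-1}=r$ (hyperplanes of the Davis complex); two walls intersect if the hyperplanes intersect. $\mathbf{W}(\alpha,\beta)$ is the set of walls separating $\alpha$ from $\beta$ (every edge path from $\alpha$ to $\beta$ uses an edge of the wall), partially ordered by $W<W'$ iff $W$ separates $\alpha$ from $W'$; $\mathbf{W}(\gamma)=\mathbf{W}(\mathrm{id},\gamma)$. $\gamma$ has $D$-bounded product projections if every pair of disjoint subsets $A,B\subset\mathbf{W}(\gamma)$ with every element of $A$ incomparable to every element of $B$ satisfies $\min(|A|,|B|)\le D$. *)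

From mathcomp Require Import all_boot.
From Stdlib Require Import Relations.
Set Implicit Arguments. Unset Strict Implicit. Unset Printing Implicit Defensive.

Section RACG.
Variable S : finType.
(* [comm s t] : the generators s and t commute (m(s,t) = 2); otherwise
   m(s,t) = infinity.  Assumed symmetric and irreflexive in the theorem. *)
Variable comm : rel S.

(* Elements of C are words over S modulo the defining relations
   s s = 1 and s t = t s (comm s t). *)
Inductive wstep : seq S -> seq S -> Prop :=
| ws_cancel (u v : seq S) (s : S) : wstep (u ++ s :: s :: v) (u ++ v)
| ws_comm (u v : seq S) (s t : S) : comm s t -> wstep (u ++ s :: t :: v) (u ++ t :: s :: v).

Definition weq : seq S -> seq S -> Prop := clos_refl_sym_trans _ wstep.

(* group operations: product = concatenation, inverse = reversal *)
Definition winv (g : seq S) : seq S := rev g.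

Definition conj_gen (g : seq S) (s : S) : seq S := g ++ s :: winv g.

Definition is_reflection (r : seq S) : Prop := exists g s, weq (conj_gen g s) r.

(* An edge path from a with labels p (ending at a p) uses an edge of the
   wall of reflection r: some edge {g, g s} of it, g = a u, has g s g^-1 = r. *)
Definition uses_wall (a p r : seq S) : Prop :=
  exists u s v, p = u ++ s :: v /\ weq (conj_gen (a ++ u) s) r.

Definition separates (r a b : seq S) : Prop :=
  forall p, weq (a ++ p) b -> uses_wall a p r.

Definition in_walls (a b r : seq S) : Prop := is_reflection r /\ separates r a b.

(* W_r < W_r' in W(a,...): W_r separates a from W_r', i.e. every edge path from
   a to any vertex of an edge of W_r' uses an edge of W_r. *)
Definition wall_lt (a r r' : seq S) : Prop :=
  forall g s, weq (conj_gen g s) r' -> separates r a g.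

Definition minimal_wall (a b r : seq S) : Prop :=
  in_walls a b r /\ ~ (exists r', in_walls a b r' /\ wall_lt a r' r).

(* hyperplanes of the Davis complex intersect: equal walls, or they cross
   a common square (a vertex g with two commuting generators). *)
Definition walls_intersect (r r' : seq S) : Prop :=
  weq r r' \/
  exists g s t, comm s t /\ weq (conj_gen g s) r /\ weq (conj_gen g t) r'.

Fixpoint distinct_walls (l : seq (seq S)) : Prop :=
  match l with
  | [::] => True
  | x :: l' => (forall y, y \in l' -> ~ weq x y) /\ distinct_walls l'
  end.

(* gamma has D-bounded product projections; W(gamma) = W(id, gamma),
   ordered from the identity. Subsets are lists of distinct walls. *)
Definition bounded_product_projections (D : nat) (gam : seq S) : Prop :=
  forall A B : seq (seq S),
    distinct_walls A -> distinct_walls B ->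
    (forall x, x \in A -> in_walls [::] gam x) ->
    (forall y, y \in B -> in_walls [::] gam y) ->
    (forall x y, x \in A -> y \in B -> ~ weq x y) ->
    (forall x y, x \in A -> y \in B ->
        ~ wall_lt [::] x y /\ ~ wall_lt [::] y x) ->
    minn (size A) (size B) <= D.

End RACG.

(* Fix a shortest word p from alpha to beta.  Along an edge path, the number
   of edges lying on a given wall changes by 0 or 2 under the defining
   relations, so its parity only depends on the endpoints.  Hence the walls of
   W(alpha, beta) are exactly the walls crossed by p, each crossed once, and
   no wall separates alpha from both endpoints of one of its own edges; the
   latter makes the order on walls irreflexive and crossing walls incomparable.
   So W(alpha, beta) is a finite poset in which two disjoint, mutually
   incomparable families have min-size at most D.  Such a poset has at most
   2D+1 minimal elements, and the up-sets U m, U m' of two of them satisfy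
   min(|U m \ U m'|, |U m' \ U m|) <= D.  For the minimal m with the largest
   up-set, every element outside U m lies in some U m' \ U m of size at most D,
   so at most 2D^2 walls lie outside U m.  A wall meeting m is m itself or
   incomparable to m, which bounds their number by 1 + 2D^2. *)

From Stdlib Require Import Relations Setoid Morphisms.
From mathcomp Require Import all_boot zify boolp.
Set Implicit Arguments. Unset Strict Implicit. Unset Printing Implicit Defensive.

Lemma card_bigcup_le (I T : finType) (P : {set I}) (F : I -> {set T}) :
  #|\bigcup_(i in P) F i| <= \sum_(i in P) #|F i|.
Proof.
elim/big_rec2: _ => [|i X n _ IH]; first by rewrite cards0.
by rewrite cardsU; lia.
Qed.

Section FinitePoset.
Variables (T : finType) (lt : rel T) (D : nat).
Hypothesis lt_irr : irreflexive lt.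
Hypothesis lt_trans : transitive lt.
Hypothesis incomparable_bound : forall A B : seq T, uniq (A ++ B) ->
  {in A & B, forall x y, ~~ lt x y && ~~ lt y x} -> minn (size A) (size B) <= D.

Definition minimal (x : T) : bool := [forall y, ~~ lt y x].

Definition upset (x : T) : {set T} := [set y | (y == x) || lt x y].

Lemma upset_trans x y z : y \in upset x -> z \in upset y -> z \in upset x.
Proof.
rewrite !inE => /orP[/eqP-> // | lt_xy] /orP[/eqP-> | lt_yz]; first by rewrite lt_xy orbT.
by rewrite (lt_trans lt_xy lt_yz) orbT.
Qed.

Lemma exists_minimal_below x : exists2 m, minimal m & x \in upset m.
Proof.
have x_up : x \in upset x by rewrite inE eqxx.
case: (@arg_minnP _ x (fun m => x \in upset m) (fun m => #|[set y | lt y m]|) x_up).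
move=> m x_up_m m_least; exists m => //.
apply/forallP => y; apply/negP => lt_ym.
have : #|[set z | lt z y]| < #|[set z | lt z m]|.
  apply: proper_card; apply/properP; split.
  - by apply/subsetP => z; rewrite !inE => /lt_trans; apply.
  - by exists y; rewrite !inE ?lt_irr.
rewrite ltnNge m_least //.
by apply: upset_trans x_up_m; rewrite inE lt_ym orbT.
Qed.

Lemma card_antichain (A : {set T}) :
  {in A &, forall x y, ~~ lt x y} -> #|A| <= 2 * D + 1.
Proof.
move=> antiA; rewrite leqNgt; apply/negP => big_A.
have := @incomparable_bound (take D.+1 (enum A)) (drop D.+1 (enum A)).
rewrite cat_take_drop enum_uniq size_take size_drop -cardE.
have -> : D.+1 < #|A| by lia.
have incomparable : {in take D.+1 (enum A) & drop D.+1 (enum A),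
    forall x y, ~~ lt x y && ~~ lt y x}.
  move=> x y /mem_take; rewrite mem_enum => xA /mem_drop; rewrite mem_enum => yA.
  by rewrite !antiA.
by move=> /(_ isT incomparable); lia.
Qed.

Lemma card_upset_diff m m' :
  minn #|upset m :\: upset m'| #|upset m' :\: upset m| <= D.
Proof.
rewrite !cardE; apply: incomparable_bound.
  rewrite cat_uniq !enum_uniq andbT /=; apply/hasPn => y.
  by rewrite !mem_enum !in_setD => /andP[/negbTE-> _]; rewrite andbF.
move=> x y; rewrite !mem_enum !in_setD => /andP[x_out x_in] /andP[y_out y_in].
apply/andP; split; apply/negP => lt_xy.
- by move: y_out; rewrite (upset_trans x_in) // inE lt_xy orbT.
- by move: x_out; rewrite (upset_trans y_in) // inE lt_xy orbT.
Qed.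

Lemma exists_minimal_small_complement (x0 : T) :
  exists2 m, minimal m & #|~: upset m| <= 2 * D * D.
Proof.
pose mins := [set m | minimal m].
have [m0 m0_min _] := exists_minimal_below x0.
case: (@arg_maxnP _ m0 minimal (fun m => #|upset m|) m0_min).
move=> m m_min m_largest; exists m => //.
have cover : ~: upset m \subset \bigcup_(m' in mins :\ m) (upset m' :\: upset m).
  apply/subsetP => x; rewrite inE => x_out.
  have [m' m'_min x_up] := exists_minimal_below x.
  apply/bigcupP; exists m'; last by rewrite inE x_out.
  by rewrite !inE m'_min andbT; apply: contraNneq x_out => <-.
have small_diff m' : m' \in mins :\ m -> #|upset m' :\: upset m| <= D.
  rewrite !inE => /andP[_ /m_largest m_larger].
  by have := card_upset_diff m m'; rewrite !cardsD [upset m' :&: _]setIC; lia.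
have card_mins : #|mins :\ m| <= 2 * D.
  have := card_antichain (A := mins).
  rewrite (cardsD1 m) inE m_min add1n addn1 ltnS; apply.
  by move=> x y; rewrite !inE => _ /forallP.
apply: leq_trans (subset_leq_card cover) _.
apply: leq_trans (card_bigcup_le _ _) _.
apply: (@leq_trans (\sum_(m' in mins :\ m) D)); first exact: leq_sum.
by rewrite sum_nat_const; nia.
Qed.

End FinitePoset.

Section RightAngledCoxeter.
Variables (S : finType) (comm : rel S).
Hypothesis comm_sym : symmetric comm.
Local Notation "x =w y" := (weq comm x y) (at level 70, no associativity).

Lemma weq_refl x : x =w x. Proof. exact: rst_refl. Qed.
Local Hint Resolve weq_refl : core.

Global Instance weq_equiv : Equivalence (weq comm).
Proof. split; [exact: rst_refl | exact: rst_sym | exact: rst_trans]. Qed.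

Lemma weq_catl x y z : y =w z -> x ++ y =w x ++ z.
Proof.
elim=> [u v step | u | u v _ IH | u v w _ IH1 _ IH2].
- by apply: rst_step; case: step => [u' v' s | u' v' s t st]; rewrite !catA; constructor.
- reflexivity.
- by symmetry.
- by transitivity (x ++ v).
Qed.

Lemma weq_catr x y z : y =w z -> y ++ x =w z ++ x.
Proof.
elim=> [u v step | u | u v _ IH | u v w _ IH1 _ IH2].
- by apply: rst_step; case: step => [u' v' s | u' v' s t st]; rewrite -!catA /=; constructor.
- reflexivity.
- by symmetry.
- by transitivity (v ++ x).
Qed.

Global Instance cat_weq_proper : Proper (weq comm ==> weq comm ==> weq comm) (@cat S).
Proof.
by move=> x y xy u v uv; transitivity (x ++ v); [apply: weq_catl | apply: weq_catr].
Qed.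

Global Instance cons_weq_proper s : Proper (weq comm ==> weq comm) (cons s).
Proof. by move=> x y; apply: (weq_catl [:: s]). Qed.

Lemma weq_rev x y : x =w y -> rev x =w rev y.
Proof.
elim=> [u v step | u | u v _ IH | u v w _ IH1 _ IH2].
- apply: rst_step; case: step => [u' v' s | u' v' s t st];
    rewrite !rev_cat /= !rev_cons -!cats1 -!catA /=; constructor.
  by rewrite comm_sym.
- reflexivity.
- by symmetry.
- by transitivity (rev v).
Qed.

Global Instance rev_weq_proper : Proper (weq comm ==> weq comm) (@rev S).
Proof. by move=> x y; apply: weq_rev. Qed.

Lemma weq_ss s x : [:: s, s & x] =w x.
Proof. by apply: rst_step; apply: (@ws_cancel _ comm [::]). Qed.

Lemma weq_catrev x : x ++ rev x =w [::].
Proof.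
elim: x => [|s x IH]; first reflexivity.
rewrite rev_cons -cats1 /=.
have -> : s :: x ++ rev x ++ [:: s] = [:: s] ++ (x ++ rev x) ++ [:: s] by rewrite /= catA.
by rewrite IH; apply: (weq_ss s [::]).
Qed.

Lemma weq_revcat x : rev x ++ x =w [::].
Proof. by have := weq_catrev (rev x); rewrite revK. Qed.

Lemma weq_catrevKl x y : x ++ rev x ++ y =w y.
Proof. by rewrite catA weq_catrev. Qed.

Lemma weq_revcatKl x y : rev x ++ x ++ y =w y.
Proof. by rewrite catA weq_revcat. Qed.

Lemma weq_catrevKr x y : y ++ x ++ rev x =w y.
Proof. by rewrite weq_catrev cats0. Qed.

Lemma weq_revcatKr x y : y ++ rev x ++ x =w y.
Proof. by rewrite weq_revcat cats0. Qed.

Lemma weq_catlI x y z : x ++ y =w x ++ z -> y =w z.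
Proof. by move=> eq_xy; rewrite -(weq_revcatKl x y) -(weq_revcatKl x z) eq_xy. Qed.

Lemma weq_catrI x y z : y ++ x =w z ++ x -> y =w z.
Proof.
by move=> eq_yz; rewrite -(weq_catrevKr x y) -(weq_catrevKr x z) !catA eq_yz.
Qed.

Lemma weq_conj2 c y z : c ++ y ++ rev c =w c ++ z ++ rev c <-> y =w z.
Proof.
split=> [eq_yz | ->] //.
by apply: (weq_catlI (x := c)); apply: (weq_catrI (x := rev c)); rewrite -!catA.
Qed.

Lemma conj_gen_cat (c g : seq S) s : conj_gen (c ++ g) s = c ++ conj_gen g s ++ rev c.
Proof. by rewrite /conj_gen /winv rev_cat -!catA. Qed.

Global Instance conj_gen_weq_proper : Proper (weq comm ==> eq ==> weq comm) (@conj_gen S).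
Proof. by move=> x y xy s _ <-; rewrite /conj_gen /winv xy. Qed.

Lemma conj_gen_rcons_same g s : conj_gen (g ++ [:: s]) s =w conj_gen g s.
Proof. by rewrite /conj_gen /winv rev_cat /= -catA /= weq_ss. Qed.

Lemma conj_gen_rcons_comm g s t : comm s t -> conj_gen (g ++ [:: s]) t =w conj_gen g t.
Proof.
move=> st; rewrite /conj_gen /winv rev_cat /= -catA /=; apply: weq_catl.
have -> : [:: s, t, s & rev g] =w [:: t, s, s & rev g].
  by apply: rst_step; apply: (@ws_comm _ comm [::]).
by rewrite weq_ss.
Qed.

(** * Counting wall crossings *)

Fixpoint crossings (r a p : seq S) : nat :=
  if p is s :: p' then `[< conj_gen a s =w r >] + crossings r (a ++ [:: s]) p' else 0.

Lemma crossings_cat r a p q :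
  crossings r a (p ++ q) = crossings r a p + crossings r (a ++ p) q.
Proof.
elim: p a => [|s p IH] a /=; first by rewrite cats0.
by rewrite IH -catA addnA.
Qed.

Lemma eq_crossings_base r a a' p : a =w a' -> crossings r a p = crossings r a' p.
Proof.
elim: p a a' => //= s p IH a a' eq_a.
rewrite (IH _ (a' ++ [:: s])) ?eq_a //; congr (nat_of_bool _ + _).
by apply: asbool_equiv_eq; rewrite eq_a.
Qed.

(* [r ++ a] is the image of [a] under the reflection [r], which fixes its own wall. *)
Lemma crossings_reflection_base r a p : crossings r (r ++ a) p = crossings r a p.
Proof.
elim: p a => //= s p IH a; rewrite -catA IH; congr (nat_of_bool _ + _).
apply: asbool_equiv_eq; rewrite conj_gen_cat.
split=> [eq_r | ->]; last by rewrite weq_catrevKr.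
by apply/(weq_conj2 r); rewrite eq_r weq_catrevKr.
Qed.

Lemma odd_crossings_wstep r a x y :
  wstep comm x y -> odd (crossings r a x) = odd (crossings r a y).
Proof.
case=> [u v s | u v s t st]; rewrite !crossings_cat /=.
- rewrite (asbool_equiv_eq (Q := conj_gen (a ++ u) s =w r)); last first.
    by rewrite conj_gen_rcons_same.
  rewrite (@eq_crossings_base r (((a ++ u) ++ [:: s]) ++ [:: s]) (a ++ u)); last first.
    by rewrite -!catA /= (weq_ss s [::]) cats0.
  by rewrite !oddD addKb.
- rewrite (asbool_equiv_eq (P := conj_gen ((a ++ u) ++ [:: s]) t =w r)
                           (Q := conj_gen (a ++ u) t =w r)); last first.
    by rewrite conj_gen_rcons_comm.
  rewrite (asbool_equiv_eq (P := conj_gen ((a ++ u) ++ [:: t]) s =w r)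
                           (Q := conj_gen (a ++ u) s =w r)); last first.
    by rewrite conj_gen_rcons_comm // comm_sym.
  rewrite (@eq_crossings_base r (((a ++ u) ++ [:: s]) ++ [:: t])
                                (((a ++ u) ++ [:: t]) ++ [:: s])).
    by congr (odd (_ + _)); rewrite addnCA.
  rewrite -!catA /=; do 2 apply: weq_catl.
  by apply: rst_step; apply: (@ws_comm _ comm [::] [::]).
Qed.

Lemma odd_crossings_weq r x y :
  x =w y -> forall a, odd (crossings r a x) = odd (crossings r a y).
Proof.
elim=> [u v step | u | u v _ IH | u v w _ IH1 _ IH2] a //.
- exact: odd_crossings_wstep.
- by rewrite IH1 IH2.
Qed.

Lemma odd_crossings_paths r a p q :
  a ++ p =w a ++ q -> odd (crossings r a p) = odd (crossings r a q).
Proof.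
move=> /(odd_crossings_weq r) /(_ [::]); rewrite !crossings_cat !oddD.
by move=> /(congr1 (addb (odd (crossings r [::] a)))); rewrite !addKb.
Qed.

Lemma first_crossing r a p : 0 < crossings r a p ->
  exists u s v, [/\ p = u ++ s :: v, crossings r a u = 0 & conj_gen (a ++ u) s =w r].
Proof.
elim: p a => //= s p IH a.
case: (asboolP (conj_gen a s =w r)) => [cross_s _ | no_cross_s].
  by exists [::], s, p; rewrite cats0.
rewrite add0n => /IH [u [t [v [-> u_free cross_t]]]].
exists (s :: u), t, v; split=> //=; first by rewrite asboolF.
by rewrite -catA in cross_t.
Qed.

Lemma uses_wall_crossings r a p : uses_wall comm a p r <-> 0 < crossings r a p.
Proof.
split=> [[u [s [v [-> cross_s]]]] | /first_crossing [u [s [v [-> _ cross_s]]]]].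
  by rewrite crossings_cat /= asboolT // addnCA addSn.
by exists u, s, v.
Qed.

Lemma crossings_nth_pos r a p x0 i : i < size p ->
  conj_gen (a ++ take i p) (nth x0 p i) =w r -> 0 < crossings r a p.
Proof.
move=> lt_i_p cross_i; apply/uses_wall_crossings.
exists (take i p), (nth x0 p i), (drop i.+1 p).
by rewrite -drop_nth // cat_take_drop.
Qed.

(* Two edges on the same wall mean [m t m^-1 = s], that is [s m t = m]. *)
Lemma skip_double_crossing X s m t v :
  conj_gen X s =w conj_gen (X ++ s :: m) t ->
  X ++ m ++ v =w X ++ s :: m ++ t :: v.
Proof.
move=> same_wall.
have loop : [::] =w m ++ t :: rev m ++ [:: s].
  apply: (weq_catlI (x := [:: s])); rewrite cats0; apply/(weq_conj2 X).
  by move: same_wall; rewrite conj_gen_cat /conj_gen /winv /= rev_cons -cats1 -!catA.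
have -> : X ++ s :: m ++ t :: v = X ++ (s :: m ++ [:: t]) ++ v by rewrite /= -catA.
apply: weq_catl; apply: weq_catr.
transitivity (s :: (m ++ t :: rev m ++ [:: s]) ++ s :: m); first by rewrite -loop /= weq_ss.
by rewrite /= -!catA /= -!catA /= weq_ss weq_revcat.
Qed.

Lemma drop_two_crossings r a p : 1 < crossings r a p ->
  exists q, [/\ a ++ q =w a ++ p, size q < size p & (crossings r a q).+2 = crossings r a p].
Proof.
move=> two_crossings.
have /first_crossing [u [s [p1 [p_eq u_free cross_s]]]] := ltnW two_crossings.
rewrite {}p_eq in two_crossings *.
have one_crossing : 0 < crossings r ((a ++ u) ++ [:: s]) p1.
  by move: two_crossings; rewrite crossings_cat u_free /= asboolT.
have [m [t [v [-> m_free cross_t]]]] := first_crossing one_crossing.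
have same_wall : conj_gen (a ++ u) s =w conj_gen ((a ++ u) ++ s :: m) t.
  by rewrite cross_s -cross_t -!catA.
have reflect_s : (a ++ u) ++ [:: s] =w r ++ a ++ u.
  by rewrite -cross_s /conj_gen /winv -!catA /= weq_revcat.
exists (u ++ m ++ v); split.
- by have := skip_double_crossing v same_wall; rewrite -!catA.
- by rewrite !size_cat /= size_cat /=; lia.
have m_free' : crossings r (a ++ u) m = 0.
  by rewrite -crossings_reflection_base -(eq_crossings_base _ _ reflect_s).
have skip_base : (((a ++ u) ++ [:: s]) ++ m) ++ [:: t] =w (a ++ u) ++ m.
  have := skip_double_crossing [::] same_wall.
  by rewrite !cats0 -!catA /= => ->.
rewrite !crossings_cat /= crossings_cat /= u_free m_free m_free' !asboolT //.
by rewrite (eq_crossings_base _ _ skip_base).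
Qed.

Lemma even_crossings_avoid r a p : ~~ odd (crossings r a p) ->
  exists2 q, a ++ q =w a ++ p & crossings r a q = 0.
Proof.
have [n] := ubnP (crossings r a p); elim: n p => // n IH p lt_p_n even_p.
case: (ltnP 1 (crossings r a p)) => [two_crossings | at_most_one].
  have [q [eq_q _ crossings_q]] := drop_two_crossings two_crossings.
  have [||q' eq_q' free_q'] := IH q.
  - by move: lt_p_n; rewrite -crossings_q; lia.
  - by rewrite -crossings_q /= negbK in even_p.
  - by exists q'; rewrite // eq_q'.
by exists p => //; move: even_p at_most_one; case: (crossings r a p) => [|[|]].
Qed.

Lemma separates_not_both_ends r a g s : conj_gen g s =w r ->
  separates comm r a g -> ~ separates comm r a (g ++ [:: s]).
Proof.
move=> wall_r sep_g sep_gs; set p := rev a ++ g.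
have a_to_g : a ++ p =w g by rewrite weq_catrevKl.
have cross_s : crossings r a (p ++ [:: s]) = (crossings r a p).+1.
  by rewrite crossings_cat /= asboolT ?addn1 // a_to_g.
case: (boolP (odd (crossings r a p))) => [odd_p | even_p].
  have [|q eq_q free_q] := @even_crossings_avoid r a (p ++ [:: s]).
    by rewrite cross_s /= odd_p.
  suff /uses_wall_crossings : uses_wall comm a q r by rewrite free_q.
  by apply: sep_gs; rewrite eq_q catA a_to_g.
have [q eq_q free_q] := even_crossings_avoid even_p.
suff /uses_wall_crossings : uses_wall comm a q r by rewrite free_q.
by apply: sep_g; rewrite eq_q.
Qed.

(** * The order on walls *)

Lemma wall_lt_irr a r : is_reflection comm r -> ~ wall_lt comm a r r.
Proof.
move=> [g [s wall_r]] lt_rr; apply: (separates_not_both_ends wall_r (lt_rr _ _ wall_r)).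
by apply: (lt_rr (g ++ [:: s]) s); rewrite conj_gen_rcons_same.
Qed.

Lemma wall_lt_crossing a r r' g s t : comm s t ->
  conj_gen g s =w r -> conj_gen g t =w r' -> ~ wall_lt comm a r r'.
Proof.
move=> st wall_r wall_r' lt_rr'.
apply: (separates_not_both_ends wall_r (lt_rr' _ _ wall_r')).
by apply: (lt_rr' (g ++ [:: s]) t); rewrite conj_gen_rcons_comm.
Qed.

Lemma wall_lt_trans a r1 r2 r3 :
  wall_lt comm a r1 r2 -> wall_lt comm a r2 r3 -> wall_lt comm a r1 r3.
Proof.
move=> lt12 lt23 g s wall_g p path_p.
have [u [t [v [-> wall_t]]]] := lt23 g s wall_g p path_p.
have [u1 [t1 [v1 [-> wall_t1]]]] := lt12 _ _ wall_t u (weq_refl _).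
by exists u1, t1, (v1 ++ t :: v); rewrite -catA.
Qed.

Lemma wall_lt_weql a r r' x : r =w r' -> wall_lt comm a r x -> wall_lt comm a r' x.
Proof.
move=> eq_r lt_rx g s wall_g p path_p.
have [u [t [v [-> wall_t]]]] := lt_rx g s wall_g p path_p.
by exists u, t, v; rewrite -eq_r.
Qed.

Lemma wall_lt_weqr a r x x' : x =w x' -> wall_lt comm a r x -> wall_lt comm a r x'.
Proof. by move=> eq_x lt_rx g s wall_g; apply: (lt_rx g s); rewrite eq_x. Qed.

Definition wconj (a x : seq S) : seq S := winv a ++ x ++ a.

Lemma wconj_inj a x y : wconj a x =w wconj a y -> x =w y.
Proof. by rewrite /wconj /winv -{2 4}(revK a) => /weq_conj2. Qed.

Lemma in_walls_wconj a b x :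
  in_walls comm a b x -> in_walls comm [::] (winv a ++ b) (wconj a x).
Proof.
move=> [[g [s wall_x]] sep_x]; split.
  by exists (rev a ++ g), s; rewrite conj_gen_cat revK /wconj wall_x.
move=> p /= path_p.
have [|u [t [v [-> wall_t]]]] := sep_x p; first by rewrite path_p weq_catrevKl.
exists u, t, v; split=> //=.
by rewrite /wconj /winv -wall_t conj_gen_cat -!catA weq_revcatKl weq_revcatKr.
Qed.

Lemma wall_lt_wconj a x y :
  wall_lt comm [::] (wconj a x) (wconj a y) -> wall_lt comm a x y.
Proof.
move=> lt_xy g s wall_g p path_p.
have wall_g' : conj_gen (rev a ++ g) s =w wconj a y.
  by rewrite conj_gen_cat revK /wconj wall_g.
have path_p' : [::] ++ p =w rev a ++ g by rewrite /= -path_p weq_revcatKl.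
have [u [t [v [-> wall_t]]]] := lt_xy _ _ wall_g' p path_p'.
exists u, t, v; split=> //; rewrite /= in wall_t.
by rewrite conj_gen_cat wall_t /wconj /winv -!catA weq_catrevKl weq_catrevKr.
Qed.

Lemma distinct_walls_wconj a l :
  distinct_walls comm l -> distinct_walls comm (map (wconj a) l).
Proof.
elim: l => //= x l IH [x_new distinct_l]; split; last exact: IH.
by move=> _ /mapP [y y_l ->] /wconj_inj; apply: x_new.
Qed.

(* Conjugating by [a] moves the base point of [W(a, b)] to the identity. *)
Lemma bounded_product_projections_at D a b :
  bounded_product_projections comm D (winv a ++ b) ->
  forall A B : seq (seq S), distinct_walls comm A -> distinct_walls comm B ->
  (forall x, x \in A -> in_walls comm a b x) ->
  (forall y, y \in B -> in_walls comm a b y) ->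
  (forall x y, x \in A -> y \in B -> ~ x =w y) ->
  (forall x y, x \in A -> y \in B -> ~ wall_lt comm a x y /\ ~ wall_lt comm a y x) ->
  minn (size A) (size B) <= D.
Proof.
move=> bpp A B dA dB walls_A walls_B disjoint incomparable.
rewrite -(size_map (wconj a) A) -(size_map (wconj a) B).
apply: bpp; try exact: distinct_walls_wconj.
- by move=> _ /mapP [x x_A ->]; apply/in_walls_wconj/walls_A.
- by move=> _ /mapP [y y_B ->]; apply/in_walls_wconj/walls_B.
- by move=> _ _ /mapP [x x_A ->] /mapP [y y_B ->] /wconj_inj; apply: disjoint.
move=> _ _ /mapP [x x_A ->] /mapP [y y_B ->].
by have [nlt_xy nlt_yx] := incomparable _ _ x_A y_B; split=> /wall_lt_wconj.
Qed.

Lemma exists_shortest_path a b :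
  exists2 p, a ++ p =w b & forall q, a ++ q =w b -> size p <= size q.
Proof.
have has_path : exists n, `[< exists p, a ++ p =w b /\ size p = n >].
  by exists (size (rev a ++ b)); apply/asboolP; exists (rev a ++ b); rewrite weq_catrevKl.
case: (ex_minnP has_path) => _ /asboolP [p [path_p <-]] shortest.
by exists p => // q path_q; apply/shortest/asboolP; exists q.
Qed.

Section ShortestPath.
Variables a b p : seq S.
Hypothesis p_path : a ++ p =w b.
Hypothesis p_shortest : forall q, a ++ q =w b -> size p <= size q.

Definition crossed_wall (i : 'I_(size p)) : seq S :=
  conj_gen (a ++ take i p) (tnth (in_tuple p) i).

Lemma crossed_wall_nth x0 i : crossed_wall i = conj_gen (a ++ take i p) (nth x0 p i).
Proof. by rewrite /crossed_wall (tnth_nth x0). Qed.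

Lemma crossings_shortest_le1 r : crossings r a p <= 1.
Proof.
rewrite leqNgt; apply/negP => /drop_two_crossings [q [path_q shorter _]].
have /p_shortest : a ++ q =w b by rewrite path_q.
by rewrite leqNgt shorter.
Qed.

Lemma crossings_crossed_wall i : crossings (crossed_wall i) a p = 1.
Proof.
apply/eqP; rewrite eqn_leq crossings_shortest_le1.
apply: (@crossings_nth_pos _ _ _ (tnth (in_tuple p) i) i (ltn_ord i)).
by rewrite -crossed_wall_nth.
Qed.

Lemma crossed_wall_in_walls i : in_walls comm a b (crossed_wall i).
Proof.
split; first by exists (a ++ take i p), (tnth (in_tuple p) i).
move=> q path_q; apply/uses_wall_crossings.
have : odd (crossings (crossed_wall i) a q).
  by rewrite (@odd_crossings_paths _ a q p) ?crossings_crossed_wall // path_q p_path.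
by case: crossings.
Qed.

Lemma crossed_wall_inj i j : crossed_wall i =w crossed_wall j -> i = j.
Proof.
wlog lt_ij : i j / i < j.
  move=> hwlog same; case: (ltngtP i j) => [lt_ij | lt_ji | /val_inj //].
    exact: hwlog.
  by apply/esym/hwlog => //; symmetry.
move=> same; exfalso.
have := crossings_cat (crossed_wall j) a (take j p) (drop j p).
rewrite cat_take_drop crossings_crossed_wall.
have x0 := tnth (in_tuple p) i.
have before : 0 < crossings (crossed_wall j) a (take j p).
  apply: (@crossings_nth_pos _ _ _ x0 i); first by rewrite size_take ltn_ord.
  by rewrite take_takel ?(ltnW lt_ij) // nth_take // -crossed_wall_nth.
have at_j : 0 < crossings (crossed_wall j) (a ++ take j p) (drop j p).
  apply: (@crossings_nth_pos _ _ _ x0 0); first by rewrite size_drop subn_gt0.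
  by rewrite take0 cats0 nth_drop addn0 -crossed_wall_nth.
lia.
Qed.

Lemma in_walls_crossed r : in_walls comm a b r -> exists i, r =w crossed_wall i.
Proof.
move=> [_ /(_ p p_path) [u [s [v [p_eq wall_s]]]]].
have lt_u : size u < size p by rewrite p_eq size_cat /= addnS ltnS leq_addr.
exists (Ordinal lt_u); rewrite (crossed_wall_nth s) /= p_eq take_size_cat //.
by rewrite nth_cat ltnn subnn wall_s.
Qed.

Definition crossed_lt : rel 'I_(size p) :=
  fun i j => `[< wall_lt comm a (crossed_wall i) (crossed_wall j) >].

Lemma crossed_lt_irr : irreflexive crossed_lt.
Proof.
move=> i; apply/asboolP/wall_lt_irr.
by have [] := crossed_wall_in_walls i.
Qed.

Lemma crossed_lt_trans : transitive crossed_lt.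
Proof.
by move=> j i k /asboolP lt_ij /asboolP lt_jk; apply/asboolP/(wall_lt_trans lt_ij).
Qed.

Lemma minimal_wall_crossed m :
  minimal crossed_lt m -> minimal_wall comm a b (crossed_wall m).
Proof.
move=> /forallP m_min; split; first exact: crossed_wall_in_walls.
move=> [r [/in_walls_crossed [k eq_r] lt_rm]].
by move/negP: (m_min k); apply; apply/asboolP/(wall_lt_weql eq_r).
Qed.

Lemma walls_intersect_crossed m V :
  in_walls comm a b V -> walls_intersect comm (crossed_wall m) V ->
  exists2 k, k \in m |: ~: upset crossed_lt m & V =w crossed_wall k.
Proof.
move=> /in_walls_crossed [k eq_V] intersect; exists k => //.
rewrite !inE; case: (eqVneq k m) => //= k_neq_m.
case: intersect => [eq_m | [g [s [t [st [wall_m wall_V]]]]]].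
  by case/eqP: k_neq_m; apply: crossed_wall_inj; rewrite -eq_V -eq_m.
apply/negP => /asboolP lt_mk; apply: (wall_lt_crossing st wall_m wall_V).
by apply: wall_lt_weqr lt_mk; symmetry.
Qed.

Variable D : nat.
Hypothesis bpp : bounded_product_projections comm D (winv a ++ b).

Lemma crossed_lt_incomparable_bound (A B : seq 'I_(size p)) : uniq (A ++ B) ->
  {in A & B, forall i j, ~~ crossed_lt i j && ~~ crossed_lt j i} ->
  minn (size A) (size B) <= D.
Proof.
rewrite cat_uniq => /and3P [uniq_A disjoint uniq_B] incomparable.
have distinct_crossed (l : seq 'I_(size p)) :
    uniq l -> distinct_walls comm (map crossed_wall l).
  elim: l => //= i l IH /andP [i_new /IH distinct_l]; split=> // _ /mapP [j j_l ->].
  by move/crossed_wall_inj => eq_ij; rewrite eq_ij j_l in i_new.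
rewrite -(size_map crossed_wall A) -(size_map crossed_wall B).
apply: (bounded_product_projections_at bpp); try exact: distinct_crossed.
- by move=> _ /mapP [i _ ->]; apply: crossed_wall_in_walls.
- by move=> _ /mapP [i _ ->]; apply: crossed_wall_in_walls.
- move=> _ _ /mapP [i i_A ->] /mapP [j j_B ->] /crossed_wall_inj eq_ij.
  by move/hasPn: disjoint => /(_ j j_B); rewrite -eq_ij i_A.
move=> _ _ /mapP [i i_A ->] /mapP [j j_B ->].
by have /andP [/asboolPn nlt_ij /asboolPn nlt_ji] := incomparable i j i_A j_B.
Qed.

End ShortestPath.

Lemma size_distinct_walls_le (I : finType) (f : I -> seq S) (T : {set I}) L :
  distinct_walls comm L -> (forall V, V \in L -> exists2 k, k \in T & V =w f k) ->
  size L <= #|T|.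
Proof.
elim: L T => //= V L IH T [V_new distinct_L] covered.
have [k k_T eq_V] := covered V (mem_head _ _).
rewrite (cardsD1 k) k_T add1n ltnS; apply: IH => // V' V'_L.
have [k' k'_T eq_V'] : exists2 k', k' \in T & V' =w f k'.
  by apply: covered; rewrite inE V'_L orbT.
exists k' => //; rewrite !inE k'_T andbT; apply/eqP => eq_k'.
by apply: (V_new V' V'_L); rewrite eq_V eq_V' eq_k'.
Qed.

End RightAngledCoxeter.

Theorem lemma3p6 (S : finType) (comm : rel S)
  (comm_sym : symmetric comm) (comm_irr : irreflexive comm)
  (D : nat) (alpha beta : seq S) :
  0 < D ->
  ~ weq comm (winv alpha ++ beta) [::] ->
  bounded_product_projections comm D (winv alpha ++ beta) ->
  exists W : seq S,
    minimal_wall comm alpha beta W /\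
    forall L : seq (seq S),
      distinct_walls comm L ->
      (forall W', W' \in L -> in_walls comm alpha beta W' /\ walls_intersect comm W W') ->
      size L <= (2 * D + 1) * 4 ^ D.
Proof.
move=> _ nontrivial bpp.
have [p p_path p_shortest] := exists_shortest_path comm alpha beta.
have p_nonempty : 0 < size p.
  case: p p_path p_shortest => //= p_path _; case: nontrivial.
  by rewrite -p_path cats0; apply: weq_revcat.
have [m m_min m_cobounded] := exists_minimal_small_complement
  (crossed_lt_irr comm_sym p_path p_shortest) (@crossed_lt_trans _ comm alpha p)
  (crossed_lt_incomparable_bound comm_sym p_path p_shortest bpp) (Ordinal p_nonempty).
exists (crossed_wall alpha m); split; first exact: minimal_wall_crossed m_min.
move=> L distinct_L meets_L.
have covered V : V \in L ->
    exists2 k, k \in m |: ~: upset (crossed_lt comm alpha (p := p)) m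
            & weq comm V (crossed_wall alpha k).
  move=> /meets_L [walls_V meets_V].
  exact: (walls_intersect_crossed comm_sym p_path p_shortest walls_V meets_V).
apply: leq_trans (size_distinct_walls_le distinct_L covered) _.
rewrite cardsU1; have := ltn_expl D (isT : 1 < 4).
by move: m_cobounded; case: (_ \notin _) => /=; nia.
Qed.
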